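(* Let $w\in\mathbb{R}^N_{>0}$, $R\ge2$, $1\le K\le R$, assume $\mu_i\ge1$ for all $i$, and let $\nu=w^{-1}\odot\big(\frac{K-1}{R-1}\mu+\frac{R-K}{R-1}\mathbf{1}\big)$. Consider Algorithm 6: initialize $y^{(0)}\in\mathcal{B}$; at each iteration $k$ draw $C_{i_k}\subseteq[R]$ uniformly at random among subsets of size $K$, independently of the past; for $r\in C_{i_k}$ set $y^{(k+1)}_r=\Pi_{\mathcal{B}_r,\nu}\big(y^{(k)}_r-\nu^{-1}\odot\nabla_rg_w(y^{(k)})\big)$, and $y^{(k+1)}_r=y^{(k)}_r$ for $r\notin C_{i_k}$. Let $g_w^*=\min_{y\in\mathcal{B}}g_w(y)$. Then for all $k\ge0$, $$\mathbb{E}\Big[g_w(y^{(k)})-g_w^*+\tfrac12d^2_{I(\nu)}(y^{(k)},\Xi_w)\Big]\le\Big[1-\frac{4K}{R(\|w\|_1\|\nu\|_1+2)}\Big]^k\Big[g_w(y^{(0)})-g_w^*+\tfrac12d^2_{I(\nu)}(y^{(0)},\Xi_w)\Big].$$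
   Context: $F_r:2^{[N]}\to\mathbb{R}$ ($r\in[R]$) are submodular with $F_r(\emptyset)=0$, base polytopes $\mathcal{B}_r=\{u\in\mathbb{R}^N:\sum_{i\in S}u_i\le F_r(S)\ \forall S,\ \sum_iu_i=F_r([N])\}$; $\mathcal{B}=\mathcal{B}_1\times\cdots\times\mathcal{B}_R$; $A:(\mathbb{R}^N)^R\to\mathbb{R}^N$, $Ay=\sum_ry_r$. $g_w(y)=\frac12\|Ay\|^2_{2,w^{-1}}$, with block gradient $\nabla_rg_w(y)=w^{-1}\odot Ay$. $S_r$ is the set of $i$ with $F_r(S\cup\{i\})\ne F_r(S)$ for some $S\subseteq[N]\setminus\{i\}$; $\mu_i=|\{r:i\in S_r\}|$; $\mathbf{1}$ is the all-ones vector. $\Xi_w$ is the set of minimizers of $g_w$ over $\mathcal{B}$. Powers, inverses and $\odot$ are element-wise; $\|z\|_{2,v}=\sqrt{\sum_iv_iz_i^2}$; $\Pi_{\Omega,v}(u)=\arg\min_{z\in\Omega}\|z-u\|_{2,v}$; $I(v)$ has all $R$ blocks equal to $v$; $\|y\|_{2,\theta}=\sqrt{\sum_r\|y_r\|^2_{2,\theta_r}}$; $d_\theta(y,\mathcal{K})=\min_{z\in\mathcal{K}}\|y-z\|_{2,\theta}$. *)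

From HB Require Import structures.
From mathcomp Require Import all_boot all_order all_algebra.
Set Implicit Arguments. Unset Strict Implicit. Unset Printing Implicit Defensive.
Import Order.TTheory GRing.Theory Num.Theory.
Local Open Scope ring_scope.

Section Defs.
Variables (T : rcfType) (N R : nat).

Definition vec := 'I_N -> T.
Definition state := 'I_R -> vec.

Definition submodular (f : {set 'I_N} -> T) : Prop :=
  f set0 = 0 /\
  forall A B : {set 'I_N}, f (A :|: B) + f (A :&: B) <= f A + f B.

Definition in_base (f : {set 'I_N} -> T) (u : vec) : Prop :=
  (forall S : {set 'I_N}, \sum_(i in S) u i <= f S) /\
  \sum_i u i = f setT.

Definition in_B (F : 'I_R -> {set 'I_N} -> T) (y : state) : Prop :=
  forall r, in_base (F r) (y r).

Definition supp (f : {set 'I_N} -> T) : {set 'I_N} :=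
  [set i | [exists S : {set 'I_N}, (i \notin S) && (f (i |: S) != f S)]].

Definition mu (F : 'I_R -> {set 'I_N} -> T) (i : 'I_N) : nat :=
  #|[set r : 'I_R | i \in supp (F r)]|.

Definition wsq (v z : vec) : T := \sum_i v i * z i ^+ 2.

Definition bsq (v : vec) (y : state) : T := \sum_r wsq v (y r).

Definition vsub (a b : vec) : vec := fun i => a i - b i.
Definition ssub (a b : state) : state := fun r => vsub (a r) (b r).

Definition Aop (y : state) : vec := fun i => \sum_r y r i.

Definition gw (w : vec) (y : state) : T := 2^-1 * wsq (fun i => (w i)^-1) (Aop y).

Definition gradr (w : vec) (y : state) (r : 'I_R) : vec :=
  fun i => (w i)^-1 * Aop y i.

Definition nu (K : nat) (F : 'I_R -> {set 'I_N} -> T) (w : vec) : vec :=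
  fun i => (w i)^-1 *
    (((K - 1)%:R / (R - 1)%:R) * (mu F i)%:R + ((R - K)%:R / (R - 1)%:R)).

Definition is_proj (F : 'I_R -> {set 'I_N} -> T) (v : vec)
    (P : 'I_R -> vec -> vec) : Prop :=
  forall r u, in_base (F r) (P r u) /\
    forall z, in_base (F r) z -> wsq v (vsub (P r u) u) <= wsq v (vsub z u).

Definition step (w v : vec) (P : 'I_R -> vec -> vec) (C : {set 'I_R})
    (y : state) : state :=
  fun r => if r \in C then P r (fun i => y r i - (v i)^-1 * gradr w y r i)
           else y r.

Definition Ksets (K : nat) : {set {set 'I_R}} := [set C : {set 'I_R} | #|C| == K].

(* E[f(y^(k))] when y^(0) = y and C_{i_0}, ..., C_{i_{k-1}} are i.i.d.
   uniform among the K-subsets of [R] *)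
Fixpoint expect (K : nat) (w v : vec) (P : 'I_R -> vec -> vec)
    (f : state -> T) (k : nat) (y : state) : T :=
  match k with
  | 0%N => f y
  | k'.+1 => (#|Ksets K|%:R)^-1 *
      \sum_(C in Ksets K) expect K w v P f k' (step w v P C y)
  end.

End Defs.

(* The Lyapunov function Phi(y) = g_w(y) - g* + d^2(y, Xi_w) / 2 contracts in
   expectation at every step.  Let xi be the point of Xi_w nearest to y.
   Averaging over the uniformly drawn K-subsets, the second moments of the
   block indicators turn the random block step into a full projected gradient
   step for a separable overapproximation of g_w whose weights are exactly nu,
   and the variational inequality of the projections compares it with xi: the
   expected decrease is at least K/R (g_w(y) - g* + ||A(y - xi)||^2_{w^-1} / 2).
   By first-order optimality of xi, g_w(y) - g* >= ||A(y - xi)||^2_{w^-1} / 2,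
   and a Hoffman-type bound gives d^2(y, Xi_w) <= ||w||_1 ||nu||_1
   ||A(y - xi)||^2_{w^-1} / 2.  The latter holds because the exchange graph
   between y and xi is acyclic: moving xi along a cycle of admissible
   exchanges would keep A xi fixed and bring xi closer to y. *)

From HB Require Import structures.
From mathcomp Require Import all_boot all_order all_algebra.
From mathcomp Require Import zify ring lra.
Import Order.TTheory GRing.Theory Num.Theory.
Local Open Scope ring_scope.
Set Implicit Arguments. Unset Strict Implicit. Unset Printing Implicit Defensive.

Section RingSums.
Variable R : comPzRingType.

Lemma sumr_mem (I : finType) (S : {set I}) (u : I -> R) :
  \sum_(i in S) u i = \sum_i (i \in S)%:R * u i.
Proof.
rewrite big_mkcond /=; apply: eq_bigr => i _.
by case: (i \in S); rewrite ?mul1r ?mul0r.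
Qed.

Lemma sumr_setUI (I : finType) (A B : {set I}) (u : I -> R) :
  \sum_(i in A :|: B) u i + \sum_(i in A :&: B) u i =
  \sum_(i in A) u i + \sum_(i in B) u i.
Proof.
rewrite !sumr_mem -!big_split /=; apply: eq_bigr => i _.
by rewrite !inE; case: (i \in A); case: (i \in B) => /=; ring.
Qed.

Lemma sumr_delta (I : finType) (x : I) (g : I -> R) :
  \sum_v (x == v)%:R * g v = g x.
Proof.
rewrite (bigD1 x) //= eqxx mul1r big1 ?addr0 // => v hv.
by rewrite eq_sym (negbTE hv) mul0r.
Qed.

Lemma sqr_sumr (I : finType) (x : I -> R) :
  (\sum_i x i) ^+ 2 = \sum_i \sum_j x i * x j.
Proof. by rewrite expr2 big_distrlr. Qed.

Lemma telescope_zip (I : eqType) (x : I) (s : seq I) (g : I -> R) :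
  \sum_(p <- zip (x :: s) s) (g p.2 - g p.1) = g (last x s) - g x.
Proof.
elim: s x => [|a s IH] x /=; first by rewrite big_nil subrr.
by rewrite big_cons /= IH; ring.
Qed.

End RingSums.

Lemma path_zip (I : eqType) (e : rel I) (x : I) (s : seq I) :
  path e x s -> forall p, p \in zip (x :: s) s -> e p.1 p.2.
Proof.
elim: s x => [|a s IH] x //= /andP[hxa hp] p.
by rewrite in_cons => /orP[/eqP -> //|]; apply: IH.
Qed.

Section RealInequalities.
Variable R : realFieldType.

(* First-order optimality along a segment. *)
Lemma ge0_lin_of_quad_ge0 (c q : R) : 0 <= q ->
  (forall t, 0 < t -> t <= 1 -> 0 <= 2 * t * c + t ^+ 2 * q) -> 0 <= c.
Proof.
move=> q0 H; rewrite leNgt; apply/negP => c0.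
pose t := Num.min 1 (- c / (q + 1)).
have q1 : 0 < q + 1 by lra.
have t0 : 0 < t by rewrite lt_min ltr01 /= divr_gt0 // oppr_gt0.
have t1 : t <= 1 by rewrite ge_min lexx.
have tq : t * (q + 1) <= - c by rewrite -ler_pdivlMr // ge_min lexx orbT.
have := H t t0 t1; nra.
Qed.

Lemma sqr_sum_le_pair (I : finType) (x : I -> R) (g : I -> I -> R) :
  (forall i j, 2 * (x i * x j) <= g i j + g j i) ->
  (\sum_i x i) ^+ 2 <= \sum_i \sum_j g i j.
Proof.
move=> H; rewrite sqr_sumr.
have sym : \sum_i \sum_j (g i j + g j i) = 2 * \sum_i \sum_j g i j.
  rewrite (eq_bigr _ (fun i _ => big_split _ _ _ _ _)) big_split /=.
  by rewrite [X in _ + X]exchange_big; ring.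
suff : 2 * \sum_i \sum_j x i * x j <= 2 * \sum_i \sum_j g i j by lra.
rewrite -sym mulr_sumr; apply: ler_sum => i _; rewrite mulr_sumr.
by apply: ler_sum => j _; apply: H.
Qed.

Lemma cauchy_schwarz (I : finType) (c a : I -> R) :
  (\sum_i c i * a i) ^+ 2 <= (\sum_i c i ^+ 2) * (\sum_i a i ^+ 2).
Proof.
rewrite big_distrlr /=.
apply: sqr_sum_le_pair => i j; have := sqr_ge0 (c i * a j - c j * a i); nra.
Qed.

Lemma cauchy_schwarz_weighted (I : finType) (w a : I -> R) :
  (forall i, 0 < w i) ->
  (\sum_i a i) ^+ 2 <= (\sum_i w i) * (\sum_i a i ^+ 2 / w i).
Proof.
move=> hw; rewrite big_distrlr /=; apply: sqr_sum_le_pair => i j.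
have wi := hw i; have wj := hw j.
have e : w i * (a j ^+ 2 / w j) + w j * (a i ^+ 2 / w i) - 2 * (a i * a j)
   = (w i * a j - w j * a i) ^+ 2 / (w i * w j).
  by field; rewrite !gt_eqF.
have : 0 <= (w i * a j - w j * a i) ^+ 2 / (w i * w j).
  by rewrite divr_ge0 ?sqr_ge0 // mulr_ge0 // ltW.
lra.
Qed.

Lemma sum_sqr_le_sqr_sum (I : finType) (a : I -> R) : (forall i, 0 <= a i) ->
  \sum_i a i ^+ 2 <= (\sum_i a i) ^+ 2.
Proof.
move=> ha; rewrite sqr_sumr; apply: ler_sum => i _.
rewrite (bigD1 i) //= -expr2 lerDl; apply: sumr_ge0 => j _.
exact: mulr_ge0.
Qed.

Definition pos_part (x : R) := Num.max x 0.
Definition neg_part (x : R) := Num.max (- x) 0.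

Lemma pos_part_ge0 x : 0 <= pos_part x.
Proof. by rewrite le_max lexx orbT. Qed.

Lemma neg_part_ge0 x : 0 <= neg_part x.
Proof. by rewrite le_max lexx orbT. Qed.

Lemma lerN_neg_part x : - x <= neg_part x.
Proof. by rewrite le_max lexx. Qed.

Variant pos_neg_spec (x : R) : R -> R -> Type :=
  | PosNegGe0 of 0 <= x : pos_neg_spec x x 0
  | PosNegLe0 of x <= 0 : pos_neg_spec x 0 (- x).

Lemma pos_negP x : pos_neg_spec x (pos_part x) (neg_part x).
Proof.
rewrite /pos_part /neg_part; have [h|/ltW h] := leP 0 x.
  by rewrite max_r ?oppr_le0 //; constructor.
by rewrite max_l ?oppr_ge0 //; constructor.
Qed.

Lemma pos_part_subN x : pos_part x - neg_part x = x.
Proof. by case: pos_negP => _; ring. Qed.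

Lemma sqr_pos_neg x : x ^+ 2 = pos_part x ^+ 2 + neg_part x ^+ 2.
Proof. by case: pos_negP => _; ring. Qed.

Lemma norm_pos_neg x : `|x| = pos_part x + neg_part x.
Proof. by case: pos_negP => h; [rewrite ger0_norm ?addr0 | rewrite ler0_norm ?add0r]. Qed.

End RealInequalities.

(** * Uniformly drawn K-subsets of blocks *)

Section KSubsets.
Variables (T : comPzRingType) (R K : nat).

Lemma card_Ksets : #|Ksets R K| = 'C(R, K).
Proof.
by rewrite -[X in 'C(X, _)]card_ord -card_draws; apply: eq_card => C; rewrite !inE.
Qed.

Lemma sum_Ksets_subset (B : {set 'I_R}) :
  \sum_(C in Ksets R K) ((C \subset B)%:R : T) = 'C(#|B|, K)%:R.
Proof.
rewrite -cards_draws -sumr_const big_mkcond [RHS]big_mkcond /=.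
by apply: eq_bigr => C _; rewrite !inE; case: (C \subset B); case: (#|C| == K).
Qed.

Lemma notin_subsetC1 (r : 'I_R) (C : {set 'I_R}) :
  (r \notin C) = (C \subset [set~ r]).
Proof. by rewrite subsetC sub1set inE. Qed.

Lemma notin2_subsetC (r s : 'I_R) (C : {set 'I_R}) :
  (r \notin C) && (s \notin C) = (C \subset ~: [set r; s]).
Proof. by rewrite subsetC subUset !sub1set !inE. Qed.

Lemma sum_Ksets_mem (r : 'I_R) : (1 <= K)%N ->
  R%:R * \sum_(C in Ksets R K) ((r \in C)%:R : T) = K%:R * #|Ksets R K|%:R.
Proof.
move=> hK.
have -> : \sum_(C in Ksets R K) ((r \in C)%:R : T)
   = \sum_(C in Ksets R K) (1 - (C \subset [set~ r])%:R).
  by apply: eq_bigr => C _; rewrite -notin_subsetC1; case: (r \in C) => /=; ring.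
rewrite sumrB sumr_const sum_Ksets_subset cardsC1 card_Ksets card_ord.
case: R r => [|n] r; first by case: r.
case: K hK => [//|k] _ /=.
rewrite binS natrD addrAC subrr add0r.
by rewrite -natrD -binS -!natrM (mul_bin_diag n.+1).
Qed.

Lemma mul_bin_diag2 n k : (n.+2 * n.+1 * 'C(n, k) = k.+2 * k.+1 * 'C(n.+2, k.+2))%N.
Proof.
have d1 := mul_bin_diag n.+1 k; have d2 := mul_bin_diag n.+2 k.+1; rewrite /= in d1 d2.
by rewrite -mulnA d1 mulnCA d2 mulnA [(k.+1 * _)%N]mulnC.
Qed.

Lemma sum_Ksets_mem2 (r s : 'I_R) : (1 <= K)%N -> r != s ->
  R%:R * (R%:R - 1) * \sum_(C in Ksets R K) ((r \in C)%:R * (s \in C)%:R : T)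
  = K%:R * (K%:R - 1) * #|Ksets R K|%:R.
Proof.
move=> hK hrs.
have -> : \sum_(C in Ksets R K) ((r \in C)%:R * (s \in C)%:R : T)
   = \sum_(C in Ksets R K) (1 - (C \subset [set~ r])%:R - (C \subset [set~ s])%:R
                            + (C \subset ~: [set r; s])%:R).
  apply: eq_bigr => C _; rewrite -!notin_subsetC1 -notin2_subsetC.
  by case: (r \in C); case: (s \in C) => /=; ring.
have cards2C : #|~: [set r; s]| = (R - 2)%N.
  by rewrite cardsCs setCK cards2 hrs card_ord.
rewrite big_split /= !sumrB sumr_const !sum_Ksets_subset !cardsC1 cards2C card_Ksets card_ord.
clear cards2C; move: r s hrs; case: R => [|[|n]] r s hrs.
- by case: r hrs.
- by rewrite (ord1 r) (ord1 s) eqxx in hrs.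
rewrite !subSS ?subn0 /=.
case: K hK => [//|[|k]] _.
- by rewrite !bin1; ring.
have pascal2 : 'C(n.+2, k.+2)%:R - 'C(n.+1, k.+2)%:R - 'C(n.+1, k.+2)%:R
    + 'C(n, k.+2)%:R = 'C(n, k)%:R :> T.
  by rewrite !binS !natrD; ring.
rewrite pascal2 [(n.+2)%:R]mulrSr [(k.+2)%:R]mulrSr !addrK -!mulrSr -!natrM.
by rewrite mul_bin_diag2.
Qed.
End KSubsets.

Section RandomBlocks.
Variables (T : realFieldType) (R K : nat).
Hypotheses (R_ge2 : (2 <= R)%N) (K_ge1 : (1 <= K)%N) (K_leR : (K <= R)%N).

Let nK : T := #|Ksets R K|%:R.

Lemma card_Ksets_gt0 : 0 < nK.
Proof. by rewrite /nK card_Ksets ltr0n bin_gt0. Qed.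

Lemma natr_R_gt1 : 1 < R%:R :> T.
Proof. by rewrite ltr1n. Qed.

Lemma sum_Ksets_sum_mem (L : 'I_R -> T) :
  \sum_(C in Ksets R K) \sum_(r in C) L r = nK * (K%:R / R%:R) * \sum_r L r.
Proof.
have R_gt0 : 0 < R%:R :> T by have := natr_R_gt1; lra.
under eq_bigr => C _ do rewrite sumr_mem.
rewrite exchange_big mulr_sumr; apply: eq_bigr => r _; rewrite -mulr_suml.
congr (_ * _); apply: (mulfI (x := R%:R)); first by rewrite gt_eqF.
by rewrite sum_Ksets_mem //; field; rewrite gt_eqF.
Qed.

Let k1 : T := K%:R / R%:R * nK.
Let k2 : T := K%:R * (K%:R - 1) / (R%:R * (R%:R - 1)) * nK.

Lemma sum_Ksets_mem_mul (r s : 'I_R) :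
  \sum_(C in Ksets R K) ((r \in C)%:R * (s \in C)%:R : T) = k2 + (r == s)%:R * (k1 - k2).
Proof.
have R_gt1 := natr_R_gt1.
have R_neq0 : R%:R != 0 :> T by rewrite gt_eqF //; lra.
case: eqP => [<-|/eqP rs].
  rewrite mul1r addrC subrK /k1.
  under eq_bigr => C _ do rewrite -natrM mulnb andbb.
  apply: (mulfI R_neq0); rewrite sum_Ksets_mem //; field.
  by rewrite R_neq0.
rewrite mul0r addr0 /k2.
apply: (mulfI (x := R%:R * (R%:R - 1))); first by rewrite mulf_neq0 // subr_eq0 gt_eqF.
by rewrite sum_Ksets_mem2 //; field; rewrite R_neq0 subr_eq0 gt_eqF.
Qed.

Lemma k2_ge0 : 0 <= k2.
Proof.
have := natr_R_gt1; have := card_Ksets_gt0; have : 1 <= K%:R :> T by rewrite ler1n.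
move=> *; rewrite /k2; apply: mulr_ge0; last by lra.
by apply: divr_ge0; apply: mulr_ge0; lra.
Qed.

Lemma sum_Ksets_sqr_expand (a : 'I_R -> T) :
  \sum_(C in Ksets R K) (\sum_(r in C) a r) ^+ 2 =
  k2 * (\sum_r a r) ^+ 2 + (k1 - k2) * \sum_r a r ^+ 2.
Proof.
transitivity (\sum_r \sum_s a r * a s *
    \sum_(C in Ksets R K) ((r \in C)%:R * (s \in C)%:R : T)).
  under eq_bigr => C _ do rewrite sumr_mem sqr_sumr.
  rewrite exchange_big /=; apply: eq_bigr => r _.
  rewrite exchange_big /=; apply: eq_bigr => s _.
  by rewrite mulr_sumr; apply: eq_bigr => C _; ring.
rewrite sqr_sumr !mulr_sumr -big_split /=; apply: eq_bigr => r _.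
rewrite -[_ * a r ^+ 2](sumr_delta r (fun s => (k1 - k2) * (a r * a s))).
rewrite !mulr_sumr -big_split /=; apply: eq_bigr => s _.
by rewrite sum_Ksets_mem_mul; ring.
Qed.

(* Expected separable overapproximation for K uniformly drawn blocks among R,
   when only the blocks of M are active. *)
Lemma sum_Ksets_sqr_le (M : {set 'I_R}) (a : 'I_R -> T) :
  (forall r, r \notin M -> a r = 0) ->
  \sum_(C in Ksets R K) (\sum_(r in C) a r) ^+ 2 <=
  nK * (K%:R / R%:R * ((K - 1)%:R / (R - 1)%:R * #|M|%:R + (R - K)%:R / (R - 1)%:R))
  * \sum_r a r ^+ 2.
Proof.
move=> a_supp.
have coefE : nK * (K%:R / R%:R * ((K - 1)%:R / (R - 1)%:R * #|M|%:R
      + (R - K)%:R / (R - 1)%:R)) = k2 * #|M|%:R + (k1 - k2).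
  have R_gt1 := natr_R_gt1.
  rewrite /k1 /k2 !natrB // ?(leq_trans _ R_ge2) //; field.
  by rewrite !gt_eqF //; lra.
have cs : (\sum_r a r) ^+ 2 <= #|M|%:R * \sum_r a r ^+ 2.
  have -> : \sum_r a r = \sum_r (r \in M)%:R * a r.
    rewrite -sumr_mem [RHS]big_mkcond; apply: eq_bigr => r _.
    by case: ifPn => // /a_supp.
  apply: le_trans (cauchy_schwarz _ _) _; rewrite ler_wpM2r ?sumr_ge0 // => [r _|].
    exact: sqr_ge0.
  suff -> : \sum_r ((r \in M)%:R : T) ^+ 2 = #|M|%:R by [].
  rewrite -sum1_card natr_sum [RHS]big_mkcond; apply: eq_bigr => r _.
  by case: (r \in M); rewrite ?expr1n ?expr0n.
rewrite sum_Ksets_sqr_expand coefE mulrDl.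
have := k2_ge0; have : 0 <= \sum_r a r ^+ 2 by apply: sumr_ge0 => r _; apply: sqr_ge0.
nra.
Qed.

End RandomBlocks.

(** * Base polytopes *)

Section BasePolytope.
Variables (T : rcfType) (N : nat).
Implicit Types (f : {set 'I_N} -> T) (u v : vec T N) (A B S X : {set 'I_N}).

Definition tight f u S : bool := \sum_(i in S) u i == f S.

Section TightSets.
Variables (f : {set 'I_N} -> T) (u : vec T N).
Hypotheses (hf : submodular f) (hu : in_base f u).

Lemma tight_set0 : tight f u set0.
Proof. by case: hf => f0 _; rewrite /tight big_set0 f0. Qed.

Lemma tight_setT : tight f u setT.
Proof. by case: hu => _ hT; rewrite /tight -hT; apply/eqP/eq_bigl => i; rewrite inE. Qed.

Lemma tight_setUI A B : tight f u A -> tight f u B ->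
  tight f u (A :|: B) && tight f u (A :&: B).
Proof.
case: hf hu => _ hsub [hle _] /eqP hA /eqP hB.
have := hle (A :|: B); have := hle (A :&: B); have := hsub A B.
have := sumr_setUI A B u; rewrite /tight => *.
by apply/andP; split; apply/eqP; lra.
Qed.

Lemma tight_bigcup (I : finType) (P : pred I) (Sf : I -> {set 'I_N}) :
  (forall j, P j -> tight f u (Sf j)) -> tight f u (\bigcup_(j | P j) Sf j).
Proof.
move=> ht; apply: (big_ind (tight f u)) => //; first exact: tight_set0.
by move=> ? ? hA hB; case/andP: (tight_setUI hA hB).
Qed.

Lemma tight_bigcap (I : finType) (P : pred I) (Sf : I -> {set 'I_N}) :
  (forall j, P j -> tight f u (Sf j)) -> tight f u (\bigcap_(j | P j) Sf j).
Proof.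
move=> ht; apply: (big_ind (tight f u)) => //; first exact: tight_setT.
by move=> ? ? hA hB; case/andP: (tight_setUI hA hB).
Qed.

(* Tight sets form a lattice, so pairwise separations combine into a single
   tight set: the union over the j of the intersection over the k. *)
Lemma tight_separating_set (P Q : pred 'I_N) :
  (forall j k, P j -> Q k -> exists S, tight f u S && (j \in S) && (k \notin S)) ->
  exists S, [/\ tight f u S, forall j, P j -> j \in S & forall k, Q k -> k \notin S].
Proof.
move=> H.
pose sep j k := odflt set0 [pick S | tight f u S && (j \in S) && (k \notin S)].
have sepP j k : P j -> Q k -> tight f u (sep j k) && (j \in sep j k) && (k \notin sep j k).
  move=> hj hk; rewrite /sep; case: pickP => [S //|hnone].
  by have [S] := H j k hj hk; rewrite hnone.
exists (\bigcup_(j | P j) \bigcap_(k | Q k) sep j k); split.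
- apply: tight_bigcup => j hj; apply: tight_bigcap => k hk.
  by case/andP: (sepP j k hj hk) => /andP[].
- move=> j hj; apply/bigcupP; exists j => //; apply/bigcapP => k hk.
  by case/andP: (sepP j k hj hk) => /andP[].
- move=> k hk; apply/bigcupP => -[j hj /bigcapP /(_ k hk)].
  by case/andP: (sepP j k hj hk) => _ /negP.
Qed.

Lemma separated_sum_le0 v X : in_base f v ->
  (forall j k, j \in X -> 0 < v j - u j -> k \notin X -> v k - u k < 0 ->
     exists S, tight f u S && (j \in S) && (k \notin S)) ->
  \sum_(i in X) (v i - u i) <= 0.
Proof.
move=> [hv _] H.
have [S [/eqP tS inS outS]] : exists S, [/\ tight f u S,
    forall j, (j \in X) && (0 < v j - u j) -> j \in S &
    forall k, (k \notin X) && (v k - u k < 0) -> k \notin S].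
  by apply: tight_separating_set => j k /andP[? ?] /andP[? ?]; apply: H.
have hS : \sum_(i in S) (v i - u i) <= 0 by rewrite sumrB tS subr_le0.
apply: le_trans hS; rewrite !sumr_mem; apply: ler_sum => i _.
case hX: (i \in X); case hSi: (i \in S); rewrite ?mul1r ?mul0r //.
- by rewrite leNgt; apply/negP => hpos; move: (inS i); rewrite hX hpos hSi => /(_ isT).
- rewrite leNgt; apply/negP => hneg.
  by move: (outS i); rewrite hX hneg hSi => /(_ isT).
Qed.

End TightSets.

Lemma in_base_notin_supp f u i : submodular f -> in_base f u ->
  i \notin supp f -> u i = 0.
Proof.
move=> [f0 _] [hle hT] hi.
have hfi S : i \notin S -> f (i |: S) = f S.
  move=> hS; apply/eqP; apply: contraNT hi => hne; rewrite inE.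
  by apply/existsP; exists S; rewrite hS hne.
have ui_le0 : u i <= 0.
  by have := hle [set i]; rewrite big_set1 -(setU0 [set i]) hfi ?inE // f0.
have ui_ge0 : 0 <= u i.
  have := hle (setT :\ i); rewrite -hfi ?setD11 // setD1K ?inE // -hT.
  rewrite [X in _ <= X](bigD1 i) //= (eq_bigl (fun j => j != i)) => [|j].
    by rewrite lerDr.
  by rewrite !inE andbT.
by apply/eqP; rewrite eq_le ui_le0 ui_ge0.
Qed.

Lemma in_base_segment f u v t : in_base f u -> in_base f v -> 0 <= t <= 1 ->
  in_base f (fun i => u i + t * (v i - u i)).
Proof.
move=> [hu huT] [hv hvT] /andP[t0 t1]; split.
- move=> S; rewrite big_split /= -mulr_sumr sumrB.
  have := hu S; have := hv S; nra.
- by rewrite big_split /= -mulr_sumr sumrB huT hvT subrr mulr0 addr0.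
Qed.

End BasePolytope.

(** * A Hoffman-type bound *)

Section Hoffman.
Variables (T : rcfType) (N R : nat) (F : 'I_R -> {set 'I_N} -> T) (nv : vec T N).
Hypotheses (nv_gt0 : forall i, 0 < nv i) (HF : forall r, submodular (F r)).
Variable r0 : 'I_R.
Variables (y xi : state T N R).
Hypotheses (Hy : in_B F y) (Hxi : in_B F xi).
Hypothesis xi_closest : forall z, in_B F z -> (forall i, Aop z i = Aop xi i) ->
  bsq nv (ssub y xi) <= bsq nv (ssub y z).

Let dy r i := y r i - xi r i.

(* Raising coordinate j and lowering coordinate k of xi r (towards y r) by a
   small amount keeps it in the base polytope iff no xi r-tight set contains j
   but not k. *)
Definition exchange r k j : bool := [&& 0 < dy r j, dy r k < 0 &
  ~~ [exists S : {set 'I_N}, tight (F r) (xi r) S && (j \in S) && (k \notin S)]].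

Definition exch : rel 'I_N := fun k j => [exists r, exchange r k j].

Definition exch_closed (X : {set 'I_N}) := forall k j, exch k j -> j \in X -> k \in X.

Lemma exch_closed_sum_le0 X : exch_closed X -> forall r, \sum_(i in X) dy r i <= 0.
Proof.
move=> hX r; apply: (separated_sum_le0 (HF r) (Hxi r) (Hy r)) => j k hj hj' hk hk'.
case: (boolP [exists S : {set 'I_N}, tight (F r) (xi r) S && (j \in S) && (k \notin S)]).
  by move=> /existsP [S hS]; exists S.
move=> hn; have /hX /(_ hj) : exch k j by apply/existsP; exists r; rewrite /exchange hj' hk'.
by rewrite (negbTE hk).
Qed.

(* Moving xi by a small step along a cycle of exchanges keeps A xi fixed and
   xi in B (tight sets only lose mass, the others have slack at least sigma),
   but strictly decreases the distance to y. *)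
Section ExchangeCycle.
Variables (x : 'I_N) (s : seq 'I_N).
Hypotheses (hp : path exch x s) (hl : last x s = x) (hne : s != [::]).

Let arcs := zip (x :: s) s.
Let blk k j := odflt r0 [pick r | exchange r k j].

Lemma exchange_blk p : p \in arcs -> exchange (blk p.1 p.2) p.1 p.2.
Proof.
move=> /(path_zip hp) /existsP [r hr]; rewrite /blk.
by case: pickP => [r' //|/(_ r)]; rewrite hr.
Qed.

Let dir r v : T :=
  \sum_(p <- arcs) (blk p.1 p.2 == r)%:R * ((p.2 == v)%:R - (p.1 == v)%:R).

Lemma sum_dir_blocks v : \sum_r dir r v = 0.
Proof.
rewrite exchange_big /= (eq_bigr (fun p => (p.2 == v)%:R - (p.1 == v)%:R)).
  by rewrite (telescope_zip x s (fun a => (a == v)%:R)) hl subrr.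
by move=> p _; rewrite sumr_delta.
Qed.

Lemma dir_mul (g : 'I_N -> T) r :
  \sum_v g v * dir r v = \sum_(p <- arcs) (blk p.1 p.2 == r)%:R * (g p.2 - g p.1).
Proof.
under eq_bigr => v _ do rewrite mulr_sumr.
rewrite exchange_big /=; apply: eq_bigr => p _.
rewrite -[g p.2](sumr_delta p.2) -[g p.1](sumr_delta p.1) -sumrB mulr_sumr.
by apply: eq_bigr => v _; rewrite ![(_ == v)]eq_sym; ring.
Qed.

Lemma sum_dir_coords r : \sum_v dir r v = 0.
Proof.
rewrite -(eq_bigr _ (fun v _ => mul1r (dir r v))) dir_mul big1_seq // => p _.
by rewrite subrr mulr0.
Qed.

Lemma sum_dir_set r (S : {set 'I_N}) : \sum_(v in S) dir r v =
  \sum_(p <- arcs) (blk p.1 p.2 == r)%:R * ((p.2 \in S)%:R - (p.1 \in S)%:R).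
Proof. by rewrite sumr_mem dir_mul. Qed.

Lemma sum_dir_tight_le0 r (S : {set 'I_N}) :
  tight (F r) (xi r) S -> \sum_(v in S) dir r v <= 0.
Proof.
move=> hS; rewrite sum_dir_set big_seq; apply: sumr_le0 => p hp'.
case: eqP => [hr|_]; last by rewrite mul0r.
rewrite mul1r; have /and3P[_ _ hn] := exchange_blk hp'; rewrite hr in hn.
case h2: (p.2 \in S); case h1: (p.1 \in S); rewrite ?subrr ?sub0r ?oppr_le0 ?ler01 //.
by case/negP: hn; apply/existsP; exists S; rewrite hS h2 h1.
Qed.

Let len : T := (size arcs)%:R.

Lemma len_gt0 : 0 < len.
Proof. by rewrite /len /arcs; case: s hne => [//|a s'] _ /=; rewrite ltr0Sn. Qed.

Lemma sum_dir_le_len r (S : {set 'I_N}) : \sum_(v in S) dir r v <= len.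
Proof.
rewrite sum_dir_set /len -sum1_size natr_sum; apply: ler_sum => p _.
by case: (_ == r); case: (p.2 \in S); case: (p.1 \in S); rewrite /=; lra.
Qed.

Let slack r (S : {set 'I_N}) := F r S - \sum_(i in S) xi r i.
Let sigma := \big[Num.min/1]_(p : 'I_R * {set 'I_N} | ~~ tight (F p.1) (xi p.1) p.2)
  slack p.1 p.2.

Lemma sigma_gt0 : 0 < sigma.
Proof.
apply: lt_bigmin => // -[r S] /= hn; rewrite /slack subr_gt0 lt_def eq_sym hn.
by case: (Hxi r) => ->.
Qed.

Lemma sigma_le_slack r (S : {set 'I_N}) : ~~ tight (F r) (xi r) S -> sigma <= slack r S.
Proof. by move=> hn; apply: (bigmin_le_cond _ (j := (r, S))). Qed.

Let gain := \sum_(p <- arcs) (nv p.2 * dy (blk p.1 p.2) p.2 - nv p.1 * dy (blk p.1 p.2) p.1).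

Lemma gain_gt0 : 0 < gain.
Proof.
have arc_gt0 p : p \in arcs ->
    0 < nv p.2 * dy (blk p.1 p.2) p.2 - nv p.1 * dy (blk p.1 p.2) p.1.
  move=> hp'; have /and3P[h2 h1 _] := exchange_blk hp'.
  by have := nv_gt0 p.1; have := nv_gt0 p.2; nra.
move: arc_gt0; rewrite /gain /arcs; case: s hne => [//|a s'] _ /= arc_gt0.
rewrite big_cons; apply: ltr_wpDr; last by apply: arc_gt0; rewrite mem_head.
rewrite big_seq; apply: sumr_ge0 => p hp'; apply/ltW/arc_gt0.
by rewrite in_cons hp' orbT.
Qed.

Lemma gainE : \sum_r \sum_v nv v * dy r v * dir r v = gain.
Proof.
under eq_bigr => r _ do rewrite (dir_mul (fun v => nv v * dy r v)).
rewrite exchange_big; apply: eq_bigr => p _.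
exact: (sumr_delta _ (fun r => nv p.2 * dy r p.2 - nv p.1 * dy r p.1)).
Qed.

Let curv := \sum_r \sum_v nv v * dir r v ^+ 2.

Lemma curv_ge0 : 0 <= curv.
Proof.
by do 2![apply: sumr_ge0 => ? _]; apply: mulr_ge0; [apply: ltW | apply: sqr_ge0].
Qed.

Let t := Num.min (sigma / len) (gain / (curv + 1)).

Lemma t_gt0 : 0 < t.
Proof.
have := curv_ge0; have := gain_gt0; have := sigma_gt0; have := len_gt0 => *.
by rewrite lt_min !divr_gt0 //; lra.
Qed.

Lemma t_len_le_sigma : t * len <= sigma.
Proof. by rewrite -ler_pdivlMr ?len_gt0 // ge_min lexx. Qed.

Lemma t_curv_le_gain : t * curv <= gain.
Proof.
have := curv_ge0; have := t_gt0 => *.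
have : t * (curv + 1) <= gain by rewrite -ler_pdivlMr ?ge_min ?lexx ?orbT //; lra.
nra.
Qed.

Let z : state T N R := fun r v => xi r v + t * dir r v.

Lemma z_in_B : in_B F z.
Proof.
move=> r; split => [S|]; rewrite /z big_split /= -mulr_sumr; last first.
  by rewrite sum_dir_coords mulr0 addr0; case: (Hxi r).
have := t_gt0; case: (boolP (tight (F r) (xi r) S)) => [/eqP hS|hS] *.
  by have := sum_dir_tight_le0 (introT eqP hS); nra.
have := sigma_le_slack hS; have := sum_dir_le_len r S; have := t_len_le_sigma.
rewrite /slack; nra.
Qed.

Lemma z_A v : Aop z v = Aop xi v.
Proof. by rewrite /Aop /z big_split /= -mulr_sumr sum_dir_blocks mulr0 addr0. Qed.

Lemma z_dist : bsq nv (ssub y z) = bsq nv (ssub y xi) - 2 * t * gain + t ^+ 2 * curv.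
Proof.
rewrite -gainE /curv /bsq /wsq /ssub /vsub /z !mulr_sumr -sumrB -big_split /=.
apply: eq_bigr => r _; rewrite !mulr_sumr -sumrB -big_split /=.
by apply: eq_bigr => v _; rewrite /dy; ring.
Qed.

Lemma exchange_cycle_false : False.
Proof.
have := xi_closest z_in_B z_A; rewrite z_dist.
by have := t_curv_le_gain; have := t_gt0; have := gain_gt0; nra.
Qed.

End ExchangeCycle.

Lemma exch_acyclic i : ~~ [exists m, connect exch i m && exch m i].
Proof.
apply/negP => /existsP [m /andP [/connectP [s hp hl] he]].
apply: (@exchange_cycle_false i (rcons s i)).
- by rewrite rcons_path hp -hl he.
- by rewrite last_rcons.
- by case: s {hp hl}.
Qed.

Let dA j := Aop y j - Aop xi j.
Let dA_neg := \sum_j neg_part (dA j).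

Lemma dA_sum_blocks j : dA j = \sum_r dy r j.
Proof. by rewrite /dA /Aop sumrB. Qed.

Lemma sum_blocks_neg_mass_le (X : {set 'I_N}) : \sum_r - \sum_(j in X) dy r j <= dA_neg.
Proof.
rewrite sumrN exchange_big -sumrN /=.
apply: (@le_trans _ _ (\sum_(j in X) neg_part (dA j))).
  by apply: ler_sum => j _; rewrite -dA_sum_blocks lerN_neg_part.
rewrite /dA_neg sumr_mem; apply: ler_sum => j _.
by case: (j \in X); rewrite ?mul1r ?mul0r ?neg_part_ge0.
Qed.

(* Apply the mass bound to the strict exchange-predecessors of i, which do not
   contain i by acyclicity. *)
Lemma sum_pos_part_le i : \sum_r pos_part (dy r i) <= dA_neg.
Proof.
pose Y := [set k | [exists m, connect exch k m && exch m i]].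
have closedY : exch_closed Y.
  move=> k j hkj; rewrite !inE => /existsP [m /andP [hc he]].
  by apply/existsP; exists m; rewrite he (connect_trans (connect1 hkj) hc).
have closedYi : exch_closed (i |: Y).
  move=> k j hkj; rewrite !inE => /orP [/eqP hj|hj].
    by apply/orP; right; apply/existsP; exists k; rewrite connect0 -hj.
  by apply/orP; right; move: (closedY k j hkj); rewrite !inE; apply.
have iY : i \notin Y by rewrite inE; apply: exch_acyclic.
apply: le_trans (sum_blocks_neg_mass_le Y); apply: ler_sum => r _.
have := exch_closed_sum_le0 closedY r; have := exch_closed_sum_le0 closedYi r.
by rewrite big_setU1 //=; case: pos_negP => *; lra.
Qed.

(* Dually, with the complement of the strict exchange-successors of i. *)
Lemma sum_neg_part_le i : \sum_r neg_part (dy r i) <= dA_neg.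
Proof.
pose Z := [set k | [exists m, connect exch i m && exch m k]].
have succ_closed k j : exch k j -> k \in Z -> j \in Z.
  rewrite !inE => hkj /existsP [m /andP [hc he]].
  by apply/existsP; exists k; rewrite hkj (connect_trans hc (connect1 he)).
have closedZ : exch_closed (~: Z).
  by move=> k j hkj; rewrite !in_setC; apply: contra; apply: succ_closed.
have iZ : i \in ~: Z by rewrite !inE; apply: exch_acyclic.
have closedZi : exch_closed (~: Z :\ i).
  move=> k j hkj; rewrite !in_setD1 !in_setC => /andP [_ hj]; apply/andP; split.
    by apply: contra hj => /eqP hk; rewrite inE; apply/existsP; exists i; rewrite connect0 -hk.
  by apply: contra hj; apply: succ_closed.
apply: le_trans (sum_blocks_neg_mass_le (~: Z)); apply: ler_sum => r _.
have := exch_closed_sum_le0 closedZ r; have := exch_closed_sum_le0 closedZi r.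
by rewrite (big_setD1 i iZ) /=; case: pos_negP => *; lra.
Qed.

Lemma sum_dA_eq0 : \sum_j dA j = 0.
Proof.
under eq_bigr => j _ do rewrite dA_sum_blocks.
rewrite exchange_big big1 // => r _.
by rewrite sumrB; case: (Hy r) => _ ->; case: (Hxi r) => _ ->; rewrite subrr.
Qed.

Lemma sum_norm_dA : \sum_j `|dA j| = 2 * dA_neg.
Proof.
have pos_eq_neg : \sum_j pos_part (dA j) = dA_neg.
  have : \sum_j (pos_part (dA j) - neg_part (dA j)) = 0.
    by rewrite -[RHS]sum_dA_eq0; apply: eq_bigr => j _; rewrite pos_part_subN.
  by rewrite sumrB => /eqP; rewrite subr_eq0 => /eqP.
under eq_bigr => j _ do rewrite norm_pos_neg.
by rewrite big_split /= pos_eq_neg /dA_neg; ring.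
Qed.

Lemma sum_blocks_sqr_le i : \sum_r dy r i ^+ 2 <= 2 * dA_neg ^+ 2.
Proof.
under eq_bigr => r _ do rewrite sqr_pos_neg.
rewrite big_split /=.
have := sum_sqr_le_sqr_sum (fun r => pos_part_ge0 (dy r i)).
have := sum_sqr_le_sqr_sum (fun r => neg_part_ge0 (dy r i)).
have := sum_pos_part_le i; have := sum_neg_part_le i.
have : 0 <= \sum_r pos_part (dy r i) by apply: sumr_ge0 => r _; apply: pos_part_ge0.
have : 0 <= \sum_r neg_part (dy r i) by apply: sumr_ge0 => r _; apply: neg_part_ge0.
nra.
Qed.

Lemma hoffman_bound (w : vec T N) : (forall i, 0 < w i) ->
  bsq nv (ssub y xi) <=
  2^-1 * ((\sum_i w i) * (\sum_i nv i)) * \sum_i (w i)^-1 * dA i ^+ 2.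
Proof.
move=> w_gt0.
have cs := cauchy_schwarz_weighted (fun j => `|dA j|) w_gt0.
rewrite /= sum_norm_dA in cs.
have normK : \sum_i `|dA i| ^+ 2 / w i = \sum_i (w i)^-1 * dA i ^+ 2.
  by apply: eq_bigr => i _; rewrite real_normK ?num_real // mulrC.
rewrite normK in cs.
have dist_le : bsq nv (ssub y xi) <= (\sum_i nv i) * (2 * dA_neg ^+ 2).
  rewrite /bsq /wsq /ssub /vsub exchange_big /= mulr_suml; apply: ler_sum => i _.
  by rewrite -mulr_sumr ler_wpM2l ?sum_blocks_sqr_le ?ltW.
have nv_sum_ge0 : 0 <= \sum_i nv i by apply: sumr_ge0 => i _; apply: ltW.
apply: le_trans dist_le _.
have := ler_wpM2l nv_sum_ge0 cs; nra.
Qed.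

End Hoffman.

(** * Linear convergence of the randomized block method *)

Section Objective.
Variables (T : rcfType) (N R : nat) (w : vec T N).

Lemma gw_taylor (y z : state T N R) :
  gw w z = gw w y + \sum_i (w i)^-1 * Aop y i * (Aop z i - Aop y i)
           + 2^-1 * \sum_i (w i)^-1 * (Aop z i - Aop y i) ^+ 2.
Proof.
rewrite /gw /wsq !mulr_sumr -!big_split /=; apply: eq_bigr => i _.
by move: ((w i)^-1) => a; field.
Qed.

Lemma Aop_segment (y z : state T N R) t i :
  Aop (fun r j => y r j + t * (z r j - y r j)) i = Aop y i + t * (Aop z i - Aop y i).
Proof. by rewrite /Aop big_split /= -mulr_sumr sumrB. Qed.

Lemma expectS K (v : vec T N) P (f : state T N R -> T) k y :
  expect K w v P f k.+1 y =
  (#|Ksets R K|%:R)^-1 * \sum_(C in Ksets R K) expect K w v P f k (step w v P C y).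
Proof. by []. Qed.

End Objective.

Lemma contraction_factor (T : realFieldType) (H G Q D : T) :
  2 <= H -> 2^-1 * Q <= G -> D <= 2^-1 * H * Q ->
  4 / (H + 2) * (G + 2^-1 * D) <= G + 2^-1 * Q.
Proof.
move=> H_ge2 QG DQ; rewrite mulrAC ler_pdivrMr; last by lra.
have : 0 <= (H - 2) * (G - 2^-1 * Q) by apply: mulr_ge0; lra.
nra.
Qed.

Section Algorithm.
Variables (T : rcfType) (N R K : nat) (F : 'I_R -> {set 'I_N} -> T) (w : vec T N).
Hypotheses (HF : forall r, submodular (F r)) (w_gt0 : forall i, 0 < w i)
  (R_ge2 : (2 <= R)%N) (K_ge1 : (1 <= K)%N) (K_leR : (K <= R)%N)
  (mu_ge1 : forall i, (1 <= mu F i)%N).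
Variable P : 'I_R -> vec T N -> vec T N.
Hypothesis HP : is_proj F (nu K F w) P.
Variable gs : T.
Hypothesis gs_le : forall y, in_B F y -> gs <= gw w y.
Variable d2 : state T N R -> T.
Hypothesis Hd2 : forall y : state T N R,
  (exists z, (in_B F z /\ gw w z = gs) /\ d2 y = bsq (nu K F w) (ssub y z)) /\
  (forall z, in_B F z -> gw w z = gs -> d2 y <= bsq (nu K F w) (ssub y z)).

Let nv := nu K F w.
Let coef i : T :=
  (K - 1)%:R / (R - 1)%:R * (mu F i)%:R + (R - K)%:R / (R - 1)%:R.

Lemma coef_ge1 i : 1 <= coef i.
Proof.
have R1_gt0 : 0 < (R - 1)%:R :> T by rewrite ltr0n subn_gt0.
have R1E : (R - 1)%:R = (K - 1)%:R + (R - K)%:R :> T by rewrite -natrD; congr _%:R; lia.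
have mu1 : 1 <= (mu F i)%:R :> T by rewrite ler1n.
have K1_ge0 : 0 <= (K - 1)%:R :> T by [].
rewrite /coef -mulrAC -mulrDl ler_pdivlMr // mul1r R1E.
nra.
Qed.

Lemma nuE i : nv i = (w i)^-1 * coef i.
Proof. by []. Qed.

Lemma nu_gt0 i : 0 < nv i.
Proof. by apply: mulr_gt0; [rewrite invr_gt0 | apply: lt_le_trans (coef_ge1 i)]. Qed.

Lemma min_first_order (xi y : state T N R) : in_B F xi -> gw w xi = gs -> in_B F y ->
  0 <= \sum_i (w i)^-1 * Aop xi i * (Aop y i - Aop xi i).
Proof.
move=> xi_B xi_min y_B.
apply: (ge0_lin_of_quad_ge0 (q := \sum_i (w i)^-1 * (Aop y i - Aop xi i) ^+ 2)).
  by apply: sumr_ge0 => i _; rewrite mulr_ge0 ?sqr_ge0 // invr_ge0 ltW.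
move=> t t_gt0 t_le1.
have zt_B : in_B F (fun r j => xi r j + t * (y r j - xi r j)).
  by move=> r; apply: in_base_segment => //; rewrite ltW.
have := gs_le zt_B; rewrite (gw_taylor _ xi) xi_min.
under eq_bigr => i _ do rewrite Aop_segment.
under [X in _ + 2^-1 * X]eq_bigr => i _ do rewrite Aop_segment.
have lin : \sum_i (w i)^-1 * Aop xi i * (Aop xi i + t * (Aop y i - Aop xi i) - Aop xi i)
    = t * \sum_i (w i)^-1 * Aop xi i * (Aop y i - Aop xi i).
  by rewrite mulr_sumr; apply: eq_bigr => i _; ring.
have quad : \sum_i (w i)^-1 * (Aop xi i + t * (Aop y i - Aop xi i) - Aop xi i) ^+ 2
    = t ^+ 2 * \sum_i (w i)^-1 * (Aop y i - Aop xi i) ^+ 2.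
  by rewrite mulr_sumr; apply: eq_bigr => i _; ring.
rewrite lin quad; lra.
Qed.

Lemma proj_variational r u (z : vec T N) : in_base (F r) z ->
  0 <= \sum_i nv i * (P r u i - u i) * (z i - P r u i).
Proof.
move=> z_B; have [Pu_B Pu_min] := HP r u.
apply: (ge0_lin_of_quad_ge0 (q := \sum_i nv i * (z i - P r u i) ^+ 2)).
  by apply: sumr_ge0 => i _; rewrite mulr_ge0 ?sqr_ge0 ?ltW ?nu_gt0.
move=> t t_gt0 t_le1.
have seg_B : in_base (F r) (fun i => P r u i + t * (z i - P r u i)).
  by apply: in_base_segment => //; rewrite ltW.
have expand : \sum_i nv i * (P r u i + t * (z i - P r u i) - u i) ^+ 2 =
    \sum_i nv i * (P r u i - u i) ^+ 2
    + (2 * t * \sum_i nv i * (P r u i - u i) * (z i - P r u i)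
       + t ^+ 2 * \sum_i nv i * (z i - P r u i) ^+ 2).
  by rewrite !mulr_sumr -!big_split /=; apply: eq_bigr => i _; ring.
have := Pu_min _ seg_B; rewrite /wsq /vsub expand; lra.
Qed.

Lemma step_in_B C y : in_B F y -> in_B F (step w nv P C y).
Proof. by move=> y_B r; rewrite /step; case: (r \in C); [apply: (HP r _).1 | apply: y_B]. Qed.

Let Phi (z : state T N R) := gw w z - gs + 2^-1 * d2 z.
Let nK : T := #|Ksets R K|%:R.
Let kR : T := K%:R / R%:R.

Lemma kR_ge0 : 0 <= kR.
Proof. by rewrite divr_ge0. Qed.

Section OneStep.
Variables (y xi : state T N R).
Hypotheses (y_B : in_B F y) (xi_B : in_B F xi) (xi_min : gw w xi = gs)
  (d2y : d2 y = bsq nv (ssub y xi)).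

Let grad i := (w i)^-1 * Aop y i.
Let upd r i := P r (fun j => y r j - (nv j)^-1 * grad j) i - y r i.

Lemma step_upd C r i : step w nv P C y r i = y r i + (r \in C)%:R * upd r i.
Proof.
by rewrite /step /upd /gradr; case: (r \in C); rewrite ?mul1r ?mul0r ?addr0 // addrC subrK.
Qed.

Lemma Aop_step C i : Aop (step w nv P C y) i = Aop y i + \sum_(r in C) upd r i.
Proof. by rewrite /Aop sumr_mem -big_split; apply: eq_bigr => r _; rewrite step_upd. Qed.

Lemma upd_notin_supp r i : i \notin supp (F r) -> upd r i = 0.
Proof.
move=> i_supp; rewrite /upd (in_base_notin_supp (HF r) (HP r _).1 i_supp).
by rewrite (in_base_notin_supp (HF r) (y_B r) i_supp) subrr.
Qed.

(* The part of the change of Phi due to block r that does not couple blocks. *)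
Let Lr r := \sum_i grad i * upd r i
  + 2^-1 * \sum_i nv i * (2 * (y r i - xi r i) * upd r i + upd r i ^+ 2).

Lemma Phi_step_le C : Phi (step w nv P C y) <= Phi y + \sum_(r in C) Lr r
  + 2^-1 * \sum_i (w i)^-1 * (\sum_(r in C) upd r i) ^+ 2.
Proof.
have gw_step : gw w (step w nv P C y) = gw w y + \sum_(r in C) \sum_i grad i * upd r i
    + 2^-1 * \sum_i (w i)^-1 * (\sum_(r in C) upd r i) ^+ 2.
  rewrite (gw_taylor _ y); under eq_bigr => i _ do rewrite Aop_step addrAC subrr add0r.
  under [X in _ + 2^-1 * X]eq_bigr => i _ do rewrite Aop_step addrAC subrr add0r.
  congr (_ + _ + _); under eq_bigr => i _ do rewrite mulr_sumr.
  by rewrite exchange_big; apply: eq_bigr => r _; apply: eq_bigr => i _; rewrite /grad; ring.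
have d2_step : d2 (step w nv P C y) <= bsq nv (ssub y xi) +
    \sum_(r in C) \sum_i nv i * (2 * (y r i - xi r i) * upd r i + upd r i ^+ 2).
  apply: le_trans ((Hd2 _).2 xi xi_B xi_min) _; rewrite le_eqVlt; apply/orP; left.
  rewrite /bsq sumr_mem -big_split /=; apply/eqP/eq_bigr => r _.
  rewrite /wsq /ssub /vsub mulr_sumr -big_split /=; apply: eq_bigr => i _.
  by rewrite step_upd; case: (r \in C); rewrite /= -/nv; ring.
have Lr_sum : \sum_(r in C) Lr r = \sum_(r in C) \sum_i grad i * upd r i
    + 2^-1 * \sum_(r in C) \sum_i nv i * (2 * (y r i - xi r i) * upd r i + upd r i ^+ 2).
  by rewrite mulr_sumr -big_split.
by rewrite /Phi gw_step Lr_sum d2y; move: d2_step; rewrite -d2y; lra.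
Qed.

Lemma Lr_le r :
  Lr r <= \sum_i grad i * (xi r i - y r i) - 2^-1 * \sum_i nv i * upd r i ^+ 2.
Proof.
rewrite -subr_ge0.
set u := fun j => y r j - (nv j)^-1 * grad j.
suff -> : \sum_i grad i * (xi r i - y r i) - 2^-1 * \sum_i nv i * upd r i ^+ 2 - Lr r =
    \sum_i nv i * (P r u i - u i) * (xi r i - P r u i) by apply: proj_variational.
rewrite /Lr !mulr_sumr -!sumrB -!big_split /= -!sumrB; apply: eq_bigr => i _.
rewrite /upd /u; have := nu_gt0 i; move: (grad i) => g nv_i_gt0.
by field; rewrite gt_eqF.
Qed.
Let resid := \sum_i (w i)^-1 * (Aop xi i - Aop y i) ^+ 2.

Lemma sum_Ksets_sqr_upd_le :
  \sum_(C in Ksets R K) \sum_i (w i)^-1 * (\sum_(r in C) upd r i) ^+ 2 <=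
  nK * kR * \sum_r \sum_i nv i * upd r i ^+ 2.
Proof.
rewrite exchange_big [X in _ <= _ * X]exchange_big /= mulr_sumr; apply: ler_sum => i _.
rewrite -mulr_sumr.
have -> : nK * kR * \sum_r nv i * upd r i ^+ 2 =
    (w i)^-1 * (nK * (kR * coef i) * \sum_r upd r i ^+ 2).
  by rewrite -mulr_sumr nuE; ring.
apply: ler_wpM2l; first by rewrite invr_ge0 ltW.
apply: (sum_Ksets_sqr_le R_ge2 K_ge1 K_leR (M := [set r | i \in supp (F r)])) => r.
by rewrite inE; apply: upd_notin_supp.
Qed.

Lemma sum_Lr_le : \sum_r Lr r <=
  gs - gw w y - 2^-1 * resid - 2^-1 * \sum_r \sum_i nv i * upd r i ^+ 2.
Proof.
have lin : \sum_r \sum_i grad i * (xi r i - y r i) = gs - gw w y - 2^-1 * resid.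
  rewrite -xi_min (gw_taylor _ y xi) exchange_big /=.
  under eq_bigr => i _ do rewrite -mulr_sumr sumrB.
  by rewrite /resid; ring.
rewrite -lin mulr_sumr -sumrB; apply: ler_sum => r _; apply: Lr_le.
Qed.

Lemma sum_Ksets_Phi_step_le :
  nK^-1 * \sum_(C in Ksets R K) Phi (step w nv P C y) <=
  Phi y - kR * (gw w y - gs + 2^-1 * resid).
Proof.
have nK_gt0 : 0 < nK := card_Ksets_gt0 T K_leR.
have stepwise : \sum_(C in Ksets R K) Phi (step w nv P C y) <= nK * Phi y
    + nK * kR * \sum_r Lr r
    + 2^-1 * \sum_(C in Ksets R K) \sum_i (w i)^-1 * (\sum_(r in C) upd r i) ^+ 2.
  apply: le_trans; first by apply: ler_sum => C _; exact: Phi_step_le.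
  rewrite big_split big_split /= sumr_const (sum_Ksets_sum_mem R_ge2 K_ge1 Lr).
  by rewrite -[Phi y *+ _]mulr_natl -mulr_sumr.
move: stepwise; have := sum_Ksets_sqr_upd_le; have := sum_Lr_le; have := kR_ge0.
set X := \sum_r \sum_i nv i * upd r i ^+ 2; set L := \sum_r Lr r.
move=> kR_ge0 L_le eso stepwise; rewrite ler_pdivrMl //.
have : nK * kR * L <= nK * kR * (gs - gw w y - 2^-1 * resid - 2^-1 * X).
  by rewrite ler_wpM2l // mulr_ge0 // ltW.
lra.
Qed.
Lemma resid_le_gap : 2^-1 * resid <= gw w y - gs.
Proof.
have := min_first_order xi_B xi_min y_B; rewrite -xi_min (gw_taylor _ xi y).
have -> : \sum_i (w i)^-1 * (Aop y i - Aop xi i) ^+ 2 = resid.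
  by apply: eq_bigr => i _; rewrite -sqrrN opprB.
lra.
Qed.

Lemma d2_le_resid : d2 y <= 2^-1 * ((\sum_i w i) * (\sum_i nv i)) * resid.
Proof.
have r0 : 'I_R := Ordinal R_ge2.
have xi_closest z : in_B F z -> (forall i, Aop z i = Aop xi i) ->
    bsq nv (ssub y xi) <= bsq nv (ssub y z).
  move=> z_B zA; rewrite -d2y; apply: (Hd2 y).2 => //.
  by rewrite -xi_min /gw /wsq; congr (_ * _); apply: eq_bigr => i _; rewrite zA.
rewrite d2y; apply: le_trans (hoffman_bound nu_gt0 HF r0 y_B xi_B xi_closest w_gt0) _.
suff -> : \sum_i (w i)^-1 * (Aop y i - Aop xi i) ^+ 2 = resid by [].
by apply: eq_bigr => i _; rewrite -sqrrN opprB.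
Qed.

Lemma sum_Ksets_Phi_step_contract : let H := (\sum_i w i) * (\sum_i nv i) in 2 <= H ->
  nK^-1 * \sum_(C in Ksets R K) Phi (step w nv P C y) <=
  (1 - 4 * K%:R / (R%:R * (H + 2))) * Phi y.
Proof.
move=> H H_ge2; apply: le_trans sum_Ksets_Phi_step_le _.
have := ler_wpM2l kR_ge0 (contraction_factor H_ge2 resid_le_gap d2_le_resid).
have R_gt0 : 0 < R%:R :> T by rewrite ltr0n; lia.
have H2_gt0 : 0 < H + 2 by lra.
have -> : 4 * K%:R / (R%:R * (H + 2)) = kR * (4 / (H + 2)).
  by rewrite /kR; field; rewrite !gt_eqF.
rewrite /Phi; lra.
Qed.
End OneStep.

Let H := (\sum_i w i) * (\sum_i nv i).
Let rate := 1 - 4 * K%:R / (R%:R * (H + 2)).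

Lemma H_ge2 : (2 <= N)%N -> 2 <= H.
Proof.
move=> N_ge2.
have diag_le : \sum_i w i * nv i <= H.
  rewrite /H big_distrlr /=; apply: ler_sum => i _.
  rewrite (bigD1 i) //= lerDl; apply: sumr_ge0 => j _.
  by rewrite mulr_ge0 // ltW ?nu_gt0.
have N_le : N%:R <= \sum_i w i * nv i.
  rewrite -[N in N%:R]card_ord -sumr_const; apply: ler_sum => i _.
  by rewrite nuE mulrA mulfV ?mul1r ?coef_ge1 // gt_eqF.
have : 2 <= N%:R :> T by rewrite ler_nat.
lra.
Qed.

Lemma rate_ge0 : 2 <= H -> 0 <= rate.
Proof.
move=> H2; have R_gt0 : 0 < R%:R :> T by rewrite ltr0n; lia.
have K_leR' : K%:R <= R%:R :> T by rewrite ler_nat.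
rewrite subr_ge0 ler_pdivrMr; last by rewrite mulr_gt0 //; lra.
nra.
Qed.

Lemma expect_Phi_le_rate k : 2 <= H -> forall y, in_B F y ->
  expect K w nv P Phi k y <= rate ^+ k * Phi y.
Proof.
move=> H2; elim: k => [|k IH] y y_B; first by rewrite expr0 mul1r.
have [[xi [[xi_B xi_min] d2y]] _] := Hd2 y.
rewrite expectS; apply: le_trans (_ : nK^-1 * \sum_(C in Ksets R K) (rate ^+ k * Phi (step w nv P C y)) <= _).
  rewrite ler_wpM2l ?invr_ge0 ?(ltW (card_Ksets_gt0 T K_leR)) //.
  by apply: ler_sum => C _; apply/IH/step_in_B.
rewrite -mulr_sumr mulrCA exprSr -mulrA ler_wpM2l ?exprn_ge0 ?rate_ge0 //.
exact: (sum_Ksets_Phi_step_contract y_B xi_B xi_min d2y).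
Qed.

Lemma in_base_dim_le1 (f : {set 'I_N} -> T) u v : (N <= 1)%N ->
  in_base f u -> in_base f v -> u =1 v.
Proof.
move=> N_le1 [_ uT] [_ vT] i.
have sum1 (x : vec T N) : \sum_j x j = x i.
  rewrite (bigD1 i) //= big1 ?addr0 // => j /eqP[]; apply: val_inj.
  by move: (ltn_ord i) (ltn_ord j); rewrite /=; lia.
by rewrite -sum1 uT -vT sum1.
Qed.

Lemma Phi_dim_le1 y : (N <= 1)%N -> in_B F y -> Phi y = 0.
Proof.
move=> N_le1 y_B; rewrite /Phi; have [[xi [[xi_B xi_min] ->]] _] := Hd2 y.
have yE r : y r =1 xi r := in_base_dim_le1 N_le1 (y_B r) (xi_B r).
have -> : gw w y = gw w xi.
  rewrite /gw /wsq; congr (_ * _); apply: eq_bigr => i _.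
  by rewrite /Aop (eq_bigr _ (fun r _ => yE r i)).
rewrite xi_min subrr add0r /bsq big1 ?mulr0 // => r _.
by rewrite /wsq big1 // => i _; rewrite /ssub /vsub yE subrr expr0n mulr0.
Qed.

Lemma expect_dim_le1 k y : (N <= 1)%N -> in_B F y -> expect K w nv P Phi k y = 0.
Proof.
move=> N_le1; elim: k y => [|k IH] y y_B; first exact: Phi_dim_le1.
by rewrite /= big1 ?mulr0 // => C _; apply/IH/step_in_B.
Qed.

Lemma expect_Phi_le k y0 : in_B F y0 -> expect K w nv P Phi k y0 <= rate ^+ k * Phi y0.
Proof.
move=> y0_B; case: (leqP N 1) => [N_le1|/H_ge2 H2]; last exact: expect_Phi_le_rate.
by rewrite expect_dim_le1 // Phi_dim_le1 // mulr0.
Qed.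

End Algorithm.

Unset Implicit Arguments.
Set Strict Implicit.

Theorem mainTheorem17 (T : rcfType) (N R K : nat)
  (F : 'I_R -> {set 'I_N} -> T) (w : 'I_N -> T)
  (HF : forall r, submodular (F r))
  (Hw : forall i, 0 < w i)
  (HR : (2 <= R)%N) (HK1 : (1 <= K)%N) (HKR : (K <= R)%N)
  (Hmu : forall i, (1 <= mu F i)%N)
  (P : 'I_R -> vec T N -> vec T N)
  (HP : is_proj F (nu K F w) P)
  (gs : T)
  (Hgs1 : exists y, in_B F y /\ gw w y = gs)
  (Hgs2 : forall y, in_B F y -> gs <= gw w y)
  (d2 : state T N R -> T)
  (Hd2 : forall y : state T N R,
     (exists z, (in_B F z /\ gw w z = gs) /\ d2 y = bsq (nu K F w) (ssub y z)) /\
     (forall z, in_B F z -> gw w z = gs -> d2 y <= bsq (nu K F w) (ssub y z)))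
  (y0 : state T N R) (Hy0 : in_B F y0) (k : nat) :
  expect K w (nu K F w) P (fun y => gw w y - gs + 2^-1 * d2 y) k y0
  <= (1 - (4 * K%:R) /
          (R%:R * ((\sum_i `|w i|) * (\sum_i `|nu K F w i|) + 2))) ^+ k
     * (gw w y0 - gs + 2^-1 * d2 y0).
Proof.
have normw : \sum_i `|w i| = \sum_i w i.
  by apply: eq_bigr => i _; rewrite ger0_norm // ltW.
have normnu : \sum_i `|nu K F w i| = \sum_i nu K F w i.
  by apply: eq_bigr => i _; rewrite ger0_norm // ltW // (nu_gt0 Hw HR HK1 HKR Hmu).
rewrite normw normnu.
exact: (expect_Phi_le HF Hw HR HK1 HKR Hmu HP Hgs2 Hd2 k Hy0).
Qed.
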